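(* Let $\emptyset\neq S\subseteq\mathbb{S}$. The following assertions are equivalent: (i) $S$ is closed and s-convex; (ii) $\mathbb{R}_+S$ is a pointed, closed, convex cone; (iii) there exists a pointed, closed, convex cone $K\subseteq\mathbb{R}^n$ such that $S=K\cap\mathbb{S}$; (iv) $S=\rho(\overline{\operatorname{conv}}\,S)$; (v) there exists a compact convex set $C\subseteq\mathbb{R}^n$ such that $S=\rho(C)$.
   Context: Standing setting: $n\ge 2$; $\mathbb{R}^n$ carries the usual inner product $\langle\cdot,\cdot\rangle$ and Euclidean norm; $o$ denotes the zero vector. $\Phi:\mathbb{R}^n\to\mathbb{R}_+:=[0,\infty)$ is a continuous function with $\Phi(tx)=t\Phi(x)$ for all $x\in\mathbb{R}^n$, $t\ge 0$, and $\Phi(x)=0$ iff $x=o$. Set $\mathbb{S}:=\{x\in\mathbb{R}^n\mid \Phi(x)=1\}$ (with the topology induced from $\mathbb{R}^n$), $\mathbb{P}:=(0,\infty)$, and $\rho:\mathbb{R}^n\to\{o\}\cup\mathbb{S}$, $\rho(x):=x/\Phi(x)$ for $x\neq o$, $\rho(o):=o$. For $\emptyset\ne\Gamma\subseteq\mathbb{R}$ and $\emptyset\ne A\subseteq\mathbb{R}^n$, $\Gamma A:=\{\gamma a\mid \gamma\in\Gamma,\ a\in A\}$. For $x,y\in\mathbb{S}$ and $\lambda\in[0,1]$, $\lambda x+_s(1-\lambda)y:=\rho(\lambda x+(1-\lambda)y)$. A nonempty set $S\subseteq\mathbb{S}$ is called s-convex if $\lambda x+_s(1-\lambda)y\in S$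 for all $x,y\in S$ and $\lambda\in[0,1]$. A cone $K\subseteq\mathbb{R}^n$ is pointed if $K\cap(-K)=\{o\}$. $\operatorname{conv}$ denotes the convex hull and $\overline{\operatorname{conv}}$ the closed convex hull. *)

(* R^n is rendered as 'rV[R]_n with its canonical
   (product) topology, which coincides with the Euclidean topology. *)
From HB Require Import structures.
From mathcomp Require Import all_boot all_order all_algebra.
From mathcomp Require Import all_classical all_reals all_analysis.
Set Implicit Arguments. Unset Strict Implicit. Unset Printing Implicit Defensive.
Import Order.TTheory GRing.Theory Num.Theory.
Import numFieldNormedType.Exports.
Local Open Scope classical_set_scope.
Local Open Scope ring_scope.

Section Defs.
Context {R : realType} {n : nat}.
Local Notation V := 'rV[R]_n.

Definition admissible_Phi (Phi : V -> R) : Prop :=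
  continuous Phi /\
  (forall x, 0 <= Phi x) /\
  (forall (t : R) (x : V), 0 <= t -> Phi (t *: x) = t * Phi x) /\
  (forall x, Phi x = 0 <-> x = 0).

Definition sph (Phi : V -> R) : set V := [set x | Phi x = 1].

Definition rho (Phi : V -> R) (x : V) : V :=
  if x == 0 then 0 else (Phi x)^-1 *: x.

Definition s_convex (Phi : V -> R) (S : set V) : Prop :=
  S !=set0 /\ S `<=` sph Phi /\
  forall x y (l : R), S x -> S y -> 0 <= l <= 1 ->
    S (rho Phi (l *: x + (1 - l) *: y)).

Definition closed_in_sph (Phi : V -> R) (S : set V) : Prop :=
  exists F : set V, closed F /\ S = sph Phi `&` F.

Definition convex (A : set V) : Prop :=
  forall x y (l : R), A x -> A y -> 0 <= l <= 1 -> A (l *: x + (1 - l) *: y).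

Definition cone (K : set V) : Prop :=
  forall (t : R) x, 0 < t -> K x -> K (t *: x).

Definition pointed (K : set V) : Prop :=
  K `&` [set - x | x in K] = [set 0].

Definition scale_set (G : set R) (A : set V) : set V :=
  [set g *: a | g in G & a in A].

Definition conv (A : set V) : set V :=
  \bigcap_(C in [set C | convex C /\ A `<=` C]) C.

Definition cl_conv (A : set V) : set V := closure (conv A).

End Defs.

(* The proof is the cycle (i) -> (ii) -> (iii) -> (iv) -> (v) -> (i).
   - (i) -> (ii): R_+ S is described through the radial projection rho;
     s-convexity gives convexity and pointedness, closedness of S in the
     sphere transfers to R_+ S by continuity of rho away from 0.
   - (iii) -> (iv): the key step.  S is compact (sph Phi is compact), so
     pointedness yields a uniform gap |s + k| >= c for s in S, k in K; by
     Caratheodory's theorem every point of conv S is a convex combination of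
     at most n + 1 points, one with weight >= 1/(n+1), so cl conv S stays at
     distance >= c/(n+1) from 0 and rho maps it back into K \cap sph = S.
   - (iv) -> (v): cl conv S is compact since sph Phi is bounded.
   - (v) -> (i): rho is continuous on C, which avoids 0, and rho commutes
     with convex combinations up to positive scaling. *)
From Pilot Require Import Defs.
From HB Require Import structures.
From mathcomp Require Import all_boot all_order all_algebra.
From mathcomp Require Import all_classical all_reals all_analysis.
Import Order.TTheory GRing.Theory Num.Theory.
Import numFieldNormedType.Exports.
Local Open Scope classical_set_scope.
Local Open Scope ring_scope.
Set Implicit Arguments. Unset Strict Implicit.

Section Topology.
Context {R : realType} {n : nat}.
Local Notation V := 'rV[R]_n.

Lemma closure_min (A C : set V) : closed C -> A `<=` C -> closure A `<=` C.
Proof. by move=> cC AC; rewrite closureE; apply: smallest_sub. Qed.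

Lemma closed_norm_preimage (B : set R) : closed B -> closed [set x : V | B `|x|].
Proof.
by move=> cB; apply: (preimage_closed _ cB) => x _; exact: norm_continuous.
Qed.

Lemma closed_set1R (x : R) : closed [set x].
Proof. exact: (accessible_closed_set1 (hausdorff_accessible (@Rhausdorff R))). Qed.

Lemma compact_uniform (A : set V) (P : R -> V -> Prop) :
  compact A ->
  (forall x, A x -> exists2 r, 0 < r &
     forall y e, ball x r y -> 0 < e -> e <= r -> P e y) ->
  exists2 e, 0 < e & forall x, A x -> P e x.
Proof.
move=> /compact_near_coveringP cA hloc.
have : \forall e \near (0:R)^'+, A `<=` P e.
  apply: cA => x Ax; have [r r0 hr] := hloc x Ax.
  exists (ball x r, [set e | 0 < e <= r]); first split => /=.
  - exact: nbhsx_ballx.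
  - near=> e; apply/andP; split.
      by near: e; exact: nbhs_right_gt.
    by near: e; exact: nbhs_right_le.
  - by case=> y e /= [yb /andP[e0 er]]; apply: hr.
move=> H; have [e [e0 He]] := filter_ex (filterI (nbhs_right_gt (0:R)) H).
by exists e.
Unshelve. all: by end_near.
Qed.

Lemma compact_closed_gap (A B : set V) :
  compact A -> closed B -> (forall x, A x -> ~ B (- x)) ->
  exists2 c, 0 < c & forall x k, A x -> B k -> c <= `|x + k|.
Proof.
move=> cA cB hAB.
have [x Ax|c c0 Hc] := @compact_uniform A
    (fun e y => forall k, B k -> e <= `|y + k|) cA; last first.
  by exists c => // x k Ax Bk; apply: Hc.
have : nbhs (- x) (~` B).
  by apply: open_nbhs_nbhs; split; [exact: closed_openC|exact: hAB].
move=> /nbhs_ballP [r r0 hr].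
exists (r / 2); first by rewrite divr_gt0.
move=> y e; rewrite -ball_normE /= => xy e0 er k Bk.
rewrite leNgt; apply/negP => ke; apply: (hr k) => //; rewrite -ball_normE /=.
have -> : - x - k = - ((x - y) + (y + k)) by rewrite addrA subrK opprD.
rewrite normrN (le_lt_trans (ler_normD _ _)) // [r]splitr ltrD //.
exact: lt_le_trans ke er.
Qed.

End Topology.

Section ConvexHull.
Context {R : realType} {n : nat}.
Local Notation V := 'rV[R]_n.

Lemma conv_min (S C : set V) : convex C -> S `<=` C -> Defs.conv S `<=` C.
Proof. by move=> cC SC x; apply; split. Qed.

Lemma sub_conv (S : set V) : S `<=` Defs.conv S.
Proof. by move=> x Sx C [_ SC]; apply: SC. Qed.

Lemma conv_convex (S : set V) : convex (Defs.conv S).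
Proof.
move=> x y l hx hy hl C [cC SC].
exact: (cC _ _ _ (hx C (conj cC SC)) (hy C (conj cC SC)) hl).
Qed.

Lemma convex_closure (A : set V) : convex A -> convex (closure A).
Proof.
move=> cA x y t cx cy /andP[t0 t1] B /nbhs_ballP [e e0 hB].
have e20 : 0 < e / 2 by rewrite divr_gt0.
have [a [Aa]] := cx _ (nbhsx_ballx x _ e20); rewrite -ball_normE /= => xa.
have [b [Ab]] := cy _ (nbhsx_ballx y _ e20); rewrite -ball_normE /= => yb.
exists (t *: a + (1 - t) *: b); split; first by apply: cA => //; rewrite t0 t1.
apply: hB; rewrite -ball_normE /=.
have -> : t *: x + (1 - t) *: y - (t *: a + (1 - t) *: b) =
    t *: (x - a) + (1 - t) *: (y - b).
  by rewrite !scalerBr opprD addrACA.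
have t1' : 0 <= 1 - t by rewrite subr_ge0.
apply: (le_lt_trans (ler_normD _ _)).
rewrite !normrZ (ger0_norm t0) (ger0_norm t1').
apply: (le_lt_trans (y := t * (e / 2) + (1 - t) * (e / 2))).
  by apply: lerD; apply: ler_wpM2l => //; apply: ltW.
by rewrite -mulrDl addrC subrK mul1r ltr_pdivrMr // ltr_pMr // ltr1n.
Qed.

Definition convex_combs (S : set V) : set V :=
  [set x | exists N (l : 'I_N -> R) (s : 'I_N -> V),
     [/\ forall i, 0 <= l i, \sum_i l i = 1, forall i, S (s i) &
         x = \sum_i l i *: s i]].

Lemma convex_combs_ext (S : set V) : S `<=` convex_combs S.
Proof.
move=> x Sx; exists 1%N, (fun=> 1), (fun=> x).
by split; rewrite // big_ord1 ?scale1r.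
Qed.

(* Concatenating two convex combinations, weighted by t and 1 - t. *)
Lemma convex_combs_convex (S : set V) : convex (convex_combs S).
Proof.
move=> _ _ t [N1 [l1 [s1 [l10 l11 Ss1 ->]]]] [N2 [l2 [s2 [l20 l21 Ss2 ->]]]].
move=> /andP[t0 t1].
pose l (i : 'I_(N1 + N2)) :=
  match fintype.split i with inl a => t * l1 a | inr b => (1 - t) * l2 b end.
pose s (i : 'I_(N1 + N2)) :=
  match fintype.split i with inl a => s1 a | inr b => s2 b end.
have sl (a : 'I_N1) : fintype.split (lshift N2 a) = inl a.
  exact: (@unsplitK _ _ (inl a)).
have sr (b : 'I_N2) : fintype.split (rshift N1 b) = inr b.
  exact: (@unsplitK _ _ (inr b)).
exists (N1 + N2)%N, l, s; split.
- by move=> i; rewrite /l; case: fintype.split => a; rewrite mulr_ge0 ?subr_ge0.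
- rewrite big_split_ord /= (eq_bigr (fun a => t * l1 a)) => [|a _]; last first.
    by rewrite /l sl.
  rewrite [X in _ + X](eq_bigr (fun b => (1 - t) * l2 b)) => [|b _]; last first.
    by rewrite /l sr.
  by rewrite -!mulr_sumr l11 l21 !mulr1 addrC subrK.
- by move=> i; rewrite /s; case: fintype.split.
- rewrite big_split_ord /= !scaler_sumr /l /s.
  by congr (_ + _); apply: eq_bigr => i _; rewrite ?sl ?sr scalerA.
Qed.

Lemma affine_dependence N (s : 'I_N -> V) : (n.+1 < N)%N ->
  exists2 a : 'I_N -> R, a != 0 &
    \sum_k a k *: s k = 0 /\ \sum_k a k = 0.
Proof.
move=> hN; pose M : 'M[R]_(N, n + 1) := \matrix_(i, j) row_mx (s i) 1 0 j.
have kM : kermx M != 0.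
  rewrite kermx_eq0 /row_free; apply: contraTneq hN => rkM.
  by rewrite -leqNgt -rkM -(addn1 n) rank_leq_col.
have [i vi] : exists i, row i (kermx M) != 0.
  apply/existsP; apply: contraNT kM => /existsPn h.
  by apply/eqP/row_matrixP => i; rewrite row0; apply/eqP; rewrite -[_ == _]negbK h.
pose v := row i (kermx M); pose a k := v 0 k.
have hv : v *m M = 0 by rewrite /v -row_mul mulmx_ker row0.
have hcol j : \sum_k a k * M k j = 0.
  by have := congr1 (fun A : 'rV_(n + 1) => A 0 j) hv; rewrite !mxE.
exists a.
  apply: contraNneq vi => a0; apply/eqP/rowP => k.
  by have := congr1 (fun f => f k) a0; rewrite /a /v /= !mxE.
split.
  apply/rowP => j; rewrite summxE mxE -[RHS](hcol (lshift 1 j)).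
  by apply: eq_bigr => k _; rewrite [M _ _]mxE row_mxEl !mxE.
rewrite -[RHS](hcol (rshift n ord0)).
by apply: eq_bigr => k _; rewrite [M _ _]mxE row_mxEr mxE mulr1.
Qed.

Lemma sum0_pos_member N (a : 'I_N -> R) :
  a != 0 -> \sum_k a k = 0 -> exists k, 0 < a k.
Proof.
move=> a0 suma; apply/existsP; apply: contraNT a0 => /existsPn npos.
have a_le0 k : a k <= 0 by rewrite leNgt npos.
apply/eqP/funext => k; apply/eqP; rewrite -oppr_eq0.
apply/eqP/(@psumr_eq0P _ _ xpredT (fun k => - a k)) => //.
  by move=> j _; rewrite oppr_ge0.
by rewrite sumrN suma oppr0.
Qed.

(* Subtract the affine
   dependence a with the largest step t keeping all weights nonnegative. *)
Lemma caratheodory_step N (l : 'I_N.+1 -> R) (s : 'I_N.+1 -> V) :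
  (n.+1 < N.+1)%N -> (forall i, 0 <= l i) -> \sum_i l i = 1 ->
  exists (l' : 'I_N -> R) (s' : 'I_N -> V),
   [/\ forall i, 0 <= l' i, \sum_i l' i = 1, forall i, exists j, s' i = s j &
       \sum_i l' i *: s' i = \sum_i l i *: s i].
Proof.
move=> hN l0 l1.
have [a a0 [as0 suma]] := affine_dependence s hN.
have [k0 ak0] := sum0_pos_member a0 suma.
have [i0 ai0 hmin] := @arg_minP _ R _ k0 (fun k => 0 < a k) (fun k => l k / a k) ak0.
set t := l i0 / a i0 in hmin.
pose lm k := l k - t * a k.
have lm_ge0 k : 0 <= lm k.
  rewrite subr_ge0 /lm; case: (ltP 0 (a k)) => ak.
    by rewrite -ler_pdivlMr //; exact: hmin.
  by apply: le_trans (l0 k); rewrite mulr_ge0_le0 // divr_ge0 // ltW.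
have lm_i0 : lm i0 = 0 by rewrite /lm /t divfK ?subrr // gt_eqF.
have lm_sum : \sum_k lm k = 1 by rewrite /lm sumrB -mulr_sumr suma mulr0 subr0.
have lm_comb : \sum_k lm k *: s k = \sum_k l k *: s k.
  rewrite /lm; under eq_bigr do rewrite scalerBl -scalerA.
  by rewrite sumrB -scaler_sumr as0 scaler0 subr0.
exists (fun j => lm (lift i0 j)), (fun j => s (lift i0 j)); split.
- by move=> j; exact: lm_ge0.
- by rewrite -lm_sum (bigD1_ord i0) //= lm_i0 add0r.
- by move=> j; exists (lift i0 j).
- by rewrite -lm_comb (bigD1_ord i0) //= lm_i0 scale0r add0r.
Qed.

Lemma caratheodory (S : set V) x : convex_combs S x ->
  exists N (l : 'I_N -> R) (s : 'I_N -> V),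
     [/\ (N <= n.+1)%N, forall i, 0 <= l i, \sum_i l i = 1, forall i, S (s i) &
         x = \sum_i l i *: s i].
Proof.
case=> N; elim: N x => [|N IH] x [l [s [l0 l1 Ss ->]]].
  by exists 0%N, l, s.
case: (leqP N.+1 n.+1) => hN; first by exists N.+1, l, s.
have [l' [s' [l'0 l'1 hs' <-]]] := caratheodory_step s hN l0 l1.
apply: IH; exists l', s'; split => // i.
by have [j ->] := hs' i.
Qed.

End ConvexHull.

Section PointedCones.
Context {R : realType} {n : nat}.
Local Notation V := 'rV[R]_n.
Variable K : set V.
Hypotheses (cK : closed K) (vK : convex K) (coK : cone K) (pK : pointed K).

Lemma pointed_cone0 : K 0.
Proof.
by have [] : (K `&` [set - x | x in K]) 0 by rewrite pK.
Qed.

Lemma coneZ t x : 0 <= t -> K x -> K (t *: x).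
Proof.
rewrite le_eqVlt => /orP[/eqP <- _|t0 Kx]; last exact: coK.
by rewrite scale0r; exact: pointed_cone0.
Qed.

(* A convex cone is closed under addition: a + b = 2 (a/2 + b/2). *)
Lemma coneD a b : K a -> K b -> K (a + b).
Proof.
move=> Ka Kb; have h2 : (1 - 1/2 : R) = 1/2 by rewrite {1}(splitr 1) addrK.
have -> : a + b = 2 *: ((1/2) *: a + (1 - 1/2) *: b).
  by rewrite h2 -scalerDr scalerA mul1r mulfV ?scale1r // pnatr_eq0.
apply: coK; first by [].
by apply: vK; rewrite // divr_ge0 //= ler_pdivrMr // mul1r ler1n.
Qed.

Lemma cone_sum N (P : pred 'I_N) (F : 'I_N -> V) :
  (forall i, K (F i)) -> K (\sum_(i | P i) F i).
Proof. by move=> KF; apply: (big_ind K) => //; [exact: pointed_cone0|exact: coneD]. Qed.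

Variable S : set V.
Hypotheses (SK : S `<=` K) (S_nz : forall x, S x -> x != 0).

Lemma pointed_cone_gap : compact S ->
  exists2 c, 0 < c & forall x k, S x -> K k -> c <= `|x + k|.
Proof.
move=> cS; apply: compact_closed_gap => // x Sx Kx.
have : (K `&` [set - y | y in K]) x by split; [exact: SK|exists (- x); rewrite ?opprK].
by rewrite pK => /= x0; move: (S_nz Sx); rewrite x0 eqxx.
Qed.

(* A convex combination of N points of S carries a weight at least 1/N; the
   rest of the combination lies in K, so the gap bounds its norm from below. *)
Lemma convex_comb_norm_lb c N (l : 'I_N -> R) (s : 'I_N -> V) :
  0 < c -> (forall x k, S x -> K k -> c <= `|x + k|) ->
  (forall i, 0 <= l i) -> \sum_i l i = 1 -> (forall i, S (s i)) ->
  c / N%:R <= `|\sum_i l i *: s i|.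
Proof.
move=> c0 gap l0 l1 Ss; case: N l s l0 l1 Ss => [|N] l s l0 l1 Ss.
  by move: l1; rewrite big_ord0 => /eqP; rewrite eq_sym oner_eq0.
have [j _ lmax] := @arg_maxP _ R _ ord0 xpredT l isT.
set lj := l j in lmax.
have lj_N : 1 <= lj * N.+1%:R.
  rewrite -[X in X <= _]l1 mulr_natr -[in lj *+ _](card_ord N.+1) -sumr_const.
  by apply: ler_sum => i _; apply: lmax.
have lj0 : 0 < lj.
  rewrite lt_def (le_trans (l0 ord0) (lmax ord0 isT)) andbT.
  by apply: contraTneq lj_N => ->; rewrite mul0r ler10.
rewrite (bigD1 j) //=; set rest := \sum_(i | i != j) _.
have Krest : K (lj^-1 *: rest).
  apply: coneZ; first by rewrite invr_ge0 ltW.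
  by apply: cone_sum => i; apply: coneZ => //; apply: SK.
have -> : l j *: s j + rest = lj *: (s j + lj^-1 *: rest).
  by rewrite scalerDr scalerA mulfV ?scale1r // gt_eqF.
have gap_j := ler_wpM2l (ltW lj0) (gap _ _ (Ss j) Krest).
rewrite normrZ gtr0_norm // (le_trans _ gap_j) //.
by rewrite ler_pdivrMr ?ltr0Sn // mulrAC -[X in X <= _]mul1r ler_pM2r.
Qed.

Lemma cl_conv_away : compact S ->
  exists2 d, 0 < d & forall x, cl_conv S x -> d <= `|x|.
Proof.
move=> cS; have [c c0 gap] := pointed_cone_gap cS.
have d0 : 0 < c / n.+1%:R by rewrite divr_gt0.
exists (c / n.+1%:R) => //; apply: closure_min.
  exact: closed_norm_preimage (@closed_ge _ _).
move=> x /(conv_min (@convex_combs_convex _ _ S) (@convex_combs_ext _ _ S)).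
move=> /caratheodory [N [l [s [hN l0 l1 Ss ->]]]].
apply: le_trans (convex_comb_norm_lb c0 gap l0 l1 Ss).
have N0 : (0 < N)%N.
  case: N l s l0 l1 Ss {hN} => // l s _.
  by rewrite big_ord0 => /eqP; rewrite eq_sym oner_eq0.
by rewrite ler_pM2l // lef_pV2 ?posrE ?ltr0n // ler_nat.
Qed.

End PointedCones.

Lemma conic_as_convex {R : realType} {n : nat} (p q : R) (a b : 'rV[R]_n) :
  0 <= p -> 0 <= q -> 0 < p + q ->
  [/\ 0 <= p / (p + q) <= 1 &
      p *: a + q *: b = (p + q) *: ((p / (p + q)) *: a + (1 - p / (p + q)) *: b)].
Proof.
move=> p0 q0 pq0; split.
  apply/andP; split; first exact: divr_ge0 p0 (ltW pq0).
  by rewrite ler_pdivrMr // mul1r lerDl.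
have h1 : 1 - p / (p + q) = q / (p + q).
  by rewrite -{1}(divff (lt0r_neq0 pq0)) -mulrBl [p + q]addrC addrK.
by rewrite h1 scalerDr !scalerA !(mulrC (p + q)) !divfK ?lt0r_neq0.
Qed.

Section Gauge.
Context {R : realType} {n : nat}.
Local Notation V := 'rV[R]_n.
Variable Phi : V -> R.
Hypothesis hP : admissible_Phi Phi.

Local Notation nonneg_hull S := (scale_set [set t : R | 0 <= t] S).

Lemma Phi_ge0 x : 0 <= Phi x.
Proof. by case: hP => _ [h _]. Qed.

Lemma PhiZ t x : 0 <= t -> Phi (t *: x) = t * Phi x.
Proof. by case: hP => _ [_ [h _]]; apply: h. Qed.

Lemma Phi0 : Phi 0 = 0.
Proof. by case: hP => _ [_ [_ h]]; apply/h. Qed.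

Lemma Phi_gt0 x : x != 0 -> 0 < Phi x.
Proof.
case: hP => _ [_ [_ h]] x0; rewrite lt_def Phi_ge0 andbT.
by apply: contraNneq x0 => /h ->.
Qed.

Lemma sph_neq0 x : sph Phi x -> x != 0.
Proof.
rewrite /sph /= => h1; apply/eqP => x0; move: h1; rewrite x0 Phi0.
by move/eqP; rewrite eq_sym oner_eq0.
Qed.

Lemma rho0 : rho Phi 0 = 0.
Proof. by rewrite /rho eqxx. Qed.

Lemma rhoE x : rho Phi x = (Phi x)^-1 *: x.
Proof. by rewrite /rho; case: eqP => [->|//]; rewrite scaler0. Qed.

Lemma rho_sph x : x != 0 -> sph Phi (rho Phi x).
Proof.
by move=> x0; rewrite /sph /= rhoE PhiZ ?invr_ge0 ?Phi_ge0 // mulVf ?lt0r_neq0 ?Phi_gt0.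
Qed.

Lemma rhoZ t x : 0 < t -> rho Phi (t *: x) = rho Phi x.
Proof.
move=> t0; rewrite !rhoE PhiZ ?ltW // scalerA invfM mulrAC mulVf ?gt_eqF //.
by rewrite mul1r.
Qed.

Lemma rho_id x : sph Phi x -> rho Phi x = x.
Proof. by rewrite /sph /= => h; rewrite rhoE h invr1 scale1r. Qed.

Lemma rho_polar x : x = Phi x *: rho Phi x.
Proof.
have [->|x0] := eqVneq x 0; first by rewrite rho0 scaler0.
by rewrite rhoE scalerA mulfV ?scale1r // gt_eqF // Phi_gt0.
Qed.

Lemma rho_continuous x : x != 0 -> {for x, continuous (rho Phi)}.
Proof.
move=> x0; have [cP _] := hP.
have -> : rho Phi = fun y => (Phi y)^-1 *: y by apply/funext => y; rewrite rhoE.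
apply: (@cvgZ _ _ _ _ _ (fun y => (Phi y)^-1) id); [exact: nbhs_filter| |exact: cvg_id].
by apply: (@cvgV _ _ (nbhs x) _ Phi (Phi x)); [rewrite gt_eqF // Phi_gt0|exact: cP].
Qed.

(* Phi is bounded below by a positive constant on the unit sphere of the norm,
   hence the gauge sphere sph Phi is bounded. *)
Lemma sph_bounded : exists2 M, 0 < M & forall x, sph Phi x -> `|x| <= M.
Proof.
have [cP _] := hP.
pose U := [set x : V | `|x| = 1].
have cU : compact U.
  apply: bounded_closed_compact; last exact: closed_norm_preimage (@closed_set1R _ 1).
  by exists 1; split; rewrite ?num_real // => M M1 x /= ->; apply: ltW.
have [x Ux|e e0 He] := @compact_uniform _ _ U (fun e y => e <= Phi y) cU.
  have px : 0 < Phi x by rewrite Phi_gt0 // -normr_gt0 Ux.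
  have : \forall y \near x, Phi x / 2 < Phi y.
    by apply: (cvgr_gt (Phi x) (cP x)); rewrite ltr_pdivrMr // ltr_pMr // ltr1n.
  move=> /nbhs_ballP [r r0 hr].
  exists (Num.min r (Phi x / 2)); first by rewrite lt_min r0 divr_gt0.
  move=> y e' yb e'0 e'r; apply/ltW/(le_lt_trans e'r); rewrite gt_min.
  by apply/orP; right; apply: hr; apply: le_ball yb; rewrite ge_min lexx.
exists e^-1; first by rewrite invr_gt0.
move=> x Sx; have nx0 : 0 < `|x| by rewrite normr_gt0 sph_neq0.
have h1 : 1 = `|x| * Phi (`|x|^-1 *: x).
  by rewrite -PhiZ ?ltW // scalerA mulfV ?gt_eqF // scale1r.
rewrite -(ler_pM2l e0) mulfV ?gt_eqF // h1 [e * _]mulrC ler_pM2l //.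
exact/He/normfZV/sph_neq0.
Qed.

Lemma sph_compact : compact (sph Phi).
Proof.
have [cP _] := hP; have [M M0 HM] := sph_bounded.
apply: bounded_closed_compact.
  by exists M; split; rewrite ?num_real // => N MN x /HM /le_trans; apply; apply: ltW.
by apply: (preimage_closed _ (@closed_set1R _ 1)) => x _; exact: cP.
Qed.

Variable S : set V.
Hypotheses (S0 : S !=set0) (Ssph : S `<=` sph Phi).

Lemma S_neq0 x : S x -> x != 0.
Proof. by move/Ssph; exact: sph_neq0. Qed.

Lemma nonneg_hullP x : nonneg_hull S x <-> x = 0 \/ S (rho Phi x).
Proof.
split.
  case=> g /= g0 [a Sa <-]; move: g0; rewrite le_eqVlt => /orP[/eqP <-|g0].
    by left; rewrite scale0r.
  by right; rewrite rhoZ // rho_id //; apply: Ssph.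
have [s0 Ss0] := S0; case=> [->|Sx].
  by exists 0; rewrite /= ?lexx //; exists s0; rewrite ?scale0r.
by exists (Phi x); [exact: Phi_ge0|exists (rho Phi x); rewrite // -rho_polar].
Qed.

Lemma nonneg_hullZ t x : 0 <= t -> nonneg_hull S x -> nonneg_hull S (t *: x).
Proof.
move=> t0 [g /= g0 [a Sa <-]]; exists (t * g); first exact: mulr_ge0.
by exists a; rewrite // scalerA.
Qed.

Lemma nonneg_hull_cone : cone (nonneg_hull S).
Proof. by move=> t x t0; apply: nonneg_hullZ; exact: ltW. Qed.

Lemma nonneg_hull_sph : S = nonneg_hull S `&` sph Phi.
Proof.
apply/seteqP; split => x.
  move=> Sx; split; last exact: Ssph.
  by exists 1; [rewrite /= ler01|exists x; rewrite ?scale1r].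
move=> [[g /= g0 [a Sa <-]]]; rewrite /sph /= PhiZ // (Ssph Sa) mulr1 => ->.
by rewrite scale1r.
Qed.

Section SConvex.
Hypothesis sc : s_convex Phi S.

(* An s-convex set never contains antipodal directions: a segment between two
   of its points misses 0, as rho of 0 is 0, not on the sphere. *)
Lemma s_convex_segment_neq0 x y mu :
  S x -> S y -> 0 <= mu <= 1 -> mu *: x + (1 - mu) *: y != 0.
Proof.
case: sc => _ [_ hc] Sx Sy hmu; apply/eqP => h.
by have := hc x y mu Sx Sy hmu; rewrite h rho0 => /S_neq0; rewrite eqxx.
Qed.

Lemma nonneg_hull_comb p q a b : 0 <= p -> 0 <= q -> S a -> S b ->
  nonneg_hull S (p *: a + q *: b).
Proof.
case: sc => _ [_ hc] p0 q0 Sa Sb; apply/nonneg_hullP.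
have [pq0|pq0] := eqVneq (p + q) 0.
  move/eqP: pq0; rewrite paddr_eq0 // => /andP[/eqP -> /eqP ->].
  by left; rewrite !scale0r addr0.
have pqp : 0 < p + q by rewrite lt_def pq0 addr_ge0.
have [hmu ->] := conic_as_convex a b p0 q0 pqp.
by right; rewrite rhoZ //; apply: hc.
Qed.

Lemma nonneg_hull_convex : convex (nonneg_hull S).
Proof.
move=> _ _ l [g /= g0 [a Sa <-]] [h /= h0 [b Sb <-]] /andP[l0 l1].
by rewrite !scalerA; apply: nonneg_hull_comb; rewrite // mulr_ge0 ?subr_ge0.
Qed.

(* If x and -x both lie in R_+ S with x != 0, then Phi-weighting the radial
   projections gives a convex combination of points of S equal to 0. *)
Lemma nonneg_hull_pointed : pointed (nonneg_hull S).
Proof.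
apply/seteqP; split => x; last first.
  move=> /= ->; split; first by apply/nonneg_hullP; left.
  by exists 0; [apply/nonneg_hullP; left|rewrite oppr0].
move=> [Kx [y Ky yx]] /=; apply/eqP; apply: contraT => x0.
have y0 : y != 0 by apply: contra_neq x0 => y0; rewrite -yx y0 oppr0.
have [/eqP|Sx] := proj1 (nonneg_hullP x) Kx; first by rewrite (negbTE x0).
have [/eqP|Sy] := proj1 (nonneg_hullP y) Ky; first by rewrite (negbTE y0).
have px := Phi_gt0 x0; have py := Phi_gt0 y0.
have [hmu e] :=
  conic_as_convex (rho Phi x) (rho Phi y) (ltW px) (ltW py) (addr_gt0 px py).
case/negP: (s_convex_segment_neq0 Sx Sy hmu).
have /eqP : (Phi x + Phi y) *: (Phi x / (Phi x + Phi y) *: rho Phi x +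
    (1 - Phi x / (Phi x + Phi y)) *: rho Phi y) = 0.
  by rewrite -e -!rho_polar -yx addNr.
by rewrite scaler_eq0 (gt_eqF (addr_gt0 px py)).
Qed.

End SConvex.

(* If S is closed in the sphere, R_+ S is closed: near a limit point x != 0,
   rho is continuous, so rho x is a limit of points of S. *)
Lemma nonneg_hull_closed : closed_in_sph Phi S -> closed (nonneg_hull S).
Proof.
move=> [F [cF SF]] x clx; apply/nonneg_hullP.
have [->|x0] := eqVneq x 0; first by left.
right; apply: contrapT => nSx.
have nF : ~ F (rho Phi x).
  by move=> Fx; apply: nSx; rewrite SF; split => //; exact: rho_sph.
have nb : nbhs x (rho Phi @^-1` (~` F)).
  apply: (rho_continuous x0); apply: open_nbhs_nbhs.
  by split; [exact: closed_openC|exact: nF].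
have [cP _] := hP.
have nbP : \forall y \near x, 0 < Phi y by exact: (cvgr_gt (Phi x) (cP x) _ (Phi_gt0 x0)).
have [y [Ky [nFy Py]]] := clx _ (filterI nb nbP).
have y0 : y != 0 by apply: contraTneq Py => ->; rewrite Phi0 ltxx.
have [/eqP|Sy] := proj1 (nonneg_hullP y) Ky; first by rewrite (negbTE y0).
by apply: nFy; move: Sy; rewrite SF => -[].
Qed.

Lemma i_ii : closed_in_sph Phi S /\ s_convex Phi S ->
  let K := nonneg_hull S in pointed K /\ closed K /\ convex K /\ cone K.
Proof.
move=> [clS sc]; split; first exact: nonneg_hull_pointed.
split; first exact: nonneg_hull_closed.
by split; [exact: nonneg_hull_convex|exact: nonneg_hull_cone].
Qed.

Lemma ii_iii :
  (let K := nonneg_hull S in pointed K /\ closed K /\ convex K /\ cone K) ->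
  exists K, [/\ pointed K, closed K, convex K, cone K & S = K `&` sph Phi].
Proof.
move=> /= [pK [cK [vK coK]]].
by exists (nonneg_hull S); split => //; exact: nonneg_hull_sph.
Qed.

(* S = K \cap sph is compact and, by the cone gap, cl_conv S avoids 0; on it
   rho lands in K \cap sph = S. *)
Lemma iii_iv :
  (exists K, [/\ pointed K, closed K, convex K, cone K & S = K `&` sph Phi]) ->
  S = rho Phi @` cl_conv S.
Proof.
move=> [K [pK cK vK coK SK]].
have cS : compact S by rewrite SK setIC; apply: compact_closedI => //; exact: sph_compact.
have SsubK : S `<=` K by rewrite SK => x [].
have [d d0 hd] := cl_conv_away cK vK coK pK SsubK S_neq0 cS.
have clK : cl_conv S `<=` K.
  by apply: closure_min cK _; apply: conv_min.
apply/seteqP; split => [x Sx|_ [w hw <-]].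
  by exists x; [apply: subset_closure; exact: sub_conv|exact: rho_id (Ssph Sx)].
have w0 : w != 0 by rewrite -normr_gt0 (lt_le_trans d0 (hd _ hw)).
rewrite SK; split; last exact: rho_sph.
by rewrite rhoE; apply: coK (clK _ hw); rewrite invr_gt0 Phi_gt0.
Qed.

(* cl_conv S is closed and lies in a ball containing the bounded sph. *)
Lemma iv_v : S = rho Phi @` cl_conv S ->
  exists C, [/\ compact C, convex C & S = rho Phi @` C].
Proof.
move=> hS; exists (cl_conv S); split => //; last first.
  by apply: convex_closure; exact: conv_convex.
have [M M0 HM] := sph_bounded.
pose B := [set x : V | `|x| <= M].
have vB : convex B.
  move=> x y l Bx By /andP[l0 l1]; rewrite /B /=.
  apply: (le_trans (ler_normD _ _)).
  rewrite !normrZ (ger0_norm l0) ger0_norm ?subr_ge0 //.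
  apply: (le_trans (y := l * M + (1 - l) * M)).
    by apply: lerD; apply: ler_wpM2l; rewrite ?subr_ge0.
  by rewrite -mulrDl addrC subrK mul1r.
have hB : cl_conv S `<=` B.
  apply: closure_min; first exact: closed_norm_preimage (@closed_le _ _).
  by apply: conv_min => // x /Ssph /HM.
apply: bounded_closed_compact; last exact: closed_closure.
by exists M; split; rewrite ?num_real // => N MN x /hB /le_trans; apply; apply: ltW.
Qed.

(* rho is continuous on C (which avoids 0), so S = rho C is compact; rho of a
   convex combination of rho c and rho d is rho of a convex combination of c, d. *)
Lemma v_i : (exists C, [/\ compact C, convex C & S = rho Phi @` C]) ->
  closed_in_sph Phi S /\ s_convex Phi S.
Proof.
move=> [C [cC vC hS]].
have C0 c : C c -> c != 0.
  move=> Cc; have Sc : S (rho Phi c) by rewrite hS; exists c.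
  by apply: contra_neq (S_neq0 Sc) => ->; rewrite rho0.
have cS : compact S.
  rewrite hS; apply: continuous_compact => //.
  apply: continuous_in_subspaceT => c; rewrite inE => Cc.
  exact: rho_continuous (C0 _ Cc).
split.
  exists S; split; first exact: (compact_closed (@norm_hausdorff R _)).
  by rewrite setIidr.
split => //; split => // x y l; rewrite hS => -[c Cc <-] [d Cd <-] /andP[l0 l1].
have pc := Phi_gt0 (C0 _ Cc); have pd := Phi_gt0 (C0 _ Cd).
rewrite !rhoE !scalerA.
have a0 : 0 <= l / Phi c by rewrite divr_ge0 // ltW.
have b0 : 0 <= (1 - l) / Phi d by rewrite divr_ge0 ?subr_ge0 // ltW.
have ab0 : 0 < l / Phi c + (1 - l) / Phi d.
  rewrite lt_def addr_ge0 // andbT paddr_eq0 // !mulf_eq0 !invr_eq0.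
  rewrite !(gt_eqF pc) !(gt_eqF pd) !orbF negb_and subr_eq0.
  by case: (eqVneq l 0) => [->|] //=; rewrite eq_sym oner_eq0.
have [hmu ->] := conic_as_convex c d a0 b0 ab0.
by rewrite -rhoE rhoZ //; eexists; first exact: vC Cc Cd hmu.
Qed.

End Gauge.

Theorem corollary1 (R : realType) (n : nat) (Phi : 'rV[R]_n -> R)
    (S : set 'rV[R]_n) :
  (2 <= n)%N -> admissible_Phi Phi -> S !=set0 -> S `<=` sph Phi ->
  [<-> closed_in_sph Phi S /\ s_convex Phi S;
       (let K := scale_set [set t : R | 0 <= t] S in
        pointed K /\ closed K /\ convex K /\ cone K);
       (exists K : set 'rV[R]_n,
          [/\ pointed K, closed K, convex K, cone K & S = K `&` sph Phi]);
       S = rho Phi @` cl_conv S;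
       (exists C : set 'rV[R]_n,
          [/\ compact C, convex C & S = rho Phi @` C])].
Proof.
move=> _ hP S0 Ssph; tfae.
- exact: i_ii.
- exact: ii_iii.
- exact: iii_iv.
- exact: iv_v.
- exact: v_i.
Qed.
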